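(* Let $n\ge1$. For an $n$-mode Gaussian channel $\phi=\phi(T,N,\mathbf d)$ define $$\mathcal I_d^{GC}(\phi):=h(\|T^{eo}\|_{\mathrm{Tr}})+h(\|T^{oe}\|_{\mathrm{Tr}}\,\|T^{ee}\|_{\mathrm{Tr}})+h(\|N^{oe}\|_{\mathrm{Tr}})+h(\|\mathbf d^{e}\|_1),$$ where $h:[0,\infty)\to\{0,1\}$ is given by $h(0)=0$ and $h(t)=1$ for $t\neq0$. Then $\mathcal I_d^{GC}$ is an imaginarity measure for Gaussian channels: (GC1) $\mathcal I_d^{GC}(\phi)\ge0$ for all $n$-mode Gaussian channels $\phi$, with equality if and only if $\phi$ is real; (GC2) $\mathcal I_d^{GC}(\Phi(\phi))\le\mathcal I_d^{GC}(\phi)$ for every $n$-mode real Gaussian superchannel $\Phi$ and every $n$-mode Gaussian channel $\phi$.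
   Context: Fix $n\ge1$. For a real $2n\times2n$ matrix $M=(m_{kl})$ write the $n\times n$ blocks $M^{oe}=(m_{2k-1,2l})_{k,l=1}^n$, $M^{eo}=(m_{2k,2l-1})_{k,l=1}^n$, $M^{ee}=(m_{2k,2l})_{k,l=1}^n$, and for $\mathbf d=(d_1,\dots,d_{2n})^{\mathrm T}$ write $\mathbf d^e=(d_2,d_4,\dots,d_{2n})^{\mathrm T}$. $\|\cdot\|_{\mathrm{Tr}}$ is the trace norm of matrices and $\|\cdot\|_1$ the $\ell_1$-norm of vectors. Let $\Delta_n=\bigoplus_{k=1}^n\begin{pmatrix}0&1\\-1&0\end{pmatrix}$ and $\Sigma_n=\bigoplus_{k=1}^n\mathrm{diag}(1,-1)$. An $n$-mode Gaussian channel is identified with a triple $\phi=\phi(T,N,\mathbf d)$, where $T=(t_{kl})$, $N=(n_{kl})$ are real $2n\times2n$ matrices with $N=N^{\mathrm T}\ge0$, $\mathbf d\in\mathbb R^{2n}$, and $N+i\Delta_n-iT\Delta_nT^{\mathrm T}\ge0$. It is called real if $d_{2k}=0$ and $n_{2k-1,2l}=0$ for all $k,l\in\{1,\dots,n\}$, and either $t_{2k,2l-1}=t_{2k,2l}=0$ for all $k,l$, or $t_{2k-1,2l}=t_{2k,2l-1}=0$ for all $k,l$. An $n$-mode Gaussian superchannel is a quadruple $\Phi=\Phi(A,O,Y,\bar{\mathbf d})$ of real $2n\times2n$ matrices $A,O,Y$ and $\bar{\mathbf d}\in\mathbb R^{2n}$ with $Y=Y^{\mathrm T}$, $OO^{\mathrm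 T}=I_{2n}$, $Y+i\Delta_n-iA\Delta_nA^{\mathrm T}\ge0$, $i\Delta_n-iO\Delta_nO^{\mathrm T}\ge0$, acting by $\Phi(\phi(T,N,\mathbf d))=\phi(AT\Sigma_nO^{\mathrm T}\Sigma_n,\ ANA^{\mathrm T}+Y,\ A\mathbf d+\bar{\mathbf d})$. It is called real if it maps every real Gaussian channel to a real Gaussian channel. *)

From HB Require Import structures.
From mathcomp Require Import all_boot all_order all_algebra.
From mathcomp Require Import zify.
From mathcomp Require Import boolp classical_sets reals.
From mathcomp Require Import complex.
Set Implicit Arguments. Unset Strict Implicit. Unset Printing Implicit Defensive.
Import Order.TTheory GRing.Theory Num.Theory.
Local Open Scope ring_scope.

Section GaussDefs.
Variable R : realType.
Variable n : nat.

(* 1-based index 2k-1 (odd) is 0-based 2k'; 1-based index 2k (even) is 0-based 2k'+1,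
   where k' = k-1 : 'I_n *)
Lemma oix_lt (k : 'I_n) : (2 * k < 2 * n)%N.
Proof. have := ltn_ord k; lia. Qed.
Lemma eix_lt (k : 'I_n) : (2 * k + 1 < 2 * n)%N.
Proof. have := ltn_ord k; lia. Qed.
Definition oix (k : 'I_n) : 'I_(2 * n) := Ordinal (oix_lt k).
Definition eix (k : 'I_n) : 'I_(2 * n) := Ordinal (eix_lt k).

Definition blk_oe (M : 'M[R]_(2 * n)) : 'M[R]_n := \matrix_(k, l) M (oix k) (eix l).
Definition blk_eo (M : 'M[R]_(2 * n)) : 'M[R]_n := \matrix_(k, l) M (eix k) (oix l).
Definition blk_ee (M : 'M[R]_(2 * n)) : 'M[R]_n := \matrix_(k, l) M (eix k) (eix l).
Definition vec_e (d : 'cV[R]_(2 * n)) : 'cV[R]_n := \col_k d (eix k) 0.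

(* Delta_n = direct sum of [[0,1],[-1,0]] ; Sigma_n = direct sum of diag(1,-1) *)
Definition Delta : 'M[R]_(2 * n) :=
  \matrix_(a, b) (if (a./2 == b./2)%N then
                    (if ~~ odd a && odd b then 1 else if odd a && ~~ odd b then -1 else 0)
                  else 0).
Definition Sigma : 'M[R]_(2 * n) :=
  \matrix_(a, b) (if a == b then (if odd a then -1 else 1) else 0).

Definition cpsd (m : nat) (M : 'M[R[i]]_m) : Prop :=
  forall v : 'cV[R[i]]_m, 0 <= ((map_mx (fun z => z^*) v)^T *m M *m v) 0 0.

Definition rpsd (m : nat) (M : 'M[R]_m) : Prop :=
  forall v : 'cV[R]_m, 0 <= (v^T *m M *m v) 0 0.

Definition cplx (m : nat) (M : 'M[R]_m) : 'M[R[i]]_m := map_mx (fun x => (x%:C)%C) M.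

Definition gauss_channel (T N : 'M[R]_(2 * n)) (d : 'cV[R]_(2 * n)) : Prop :=
  N^T = N /\ rpsd N /\
  cpsd (cplx N + 'i%C *: cplx Delta - 'i%C *: cplx (T *m Delta *m T^T)).

Definition real_conds (T N : 'M[R]_(2 * n)) (d : 'cV[R]_(2 * n)) : Prop :=
  (forall k : 'I_n, d (eix k) 0 = 0) /\
  (forall k l : 'I_n, N (oix k) (eix l) = 0) /\
  ((forall k l : 'I_n, T (eix k) (oix l) = 0 /\ T (eix k) (eix l) = 0) \/
   (forall k l : 'I_n, T (oix k) (eix l) = 0 /\ T (eix k) (oix l) = 0)).

Definition real_channel T N d : Prop := gauss_channel T N d /\ real_conds T N d.

Definition gauss_superchannel (A O Y : 'M[R]_(2 * n)) (db : 'cV[R]_(2 * n)) : Prop :=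
  Y^T = Y /\ O *m O^T = 1%:M /\
  cpsd (cplx Y + 'i%C *: cplx Delta - 'i%C *: cplx (A *m Delta *m A^T)) /\
  cpsd ('i%C *: cplx Delta - 'i%C *: cplx (O *m Delta *m O^T)).

Definition sc_T (A O : 'M[R]_(2 * n)) (T : 'M[R]_(2 * n)) : 'M[R]_(2 * n) :=
  A *m T *m Sigma *m O^T *m Sigma.
Definition sc_N (A Y : 'M[R]_(2 * n)) (N : 'M[R]_(2 * n)) : 'M[R]_(2 * n) :=
  A *m N *m A^T + Y.
Definition sc_d (A : 'M[R]_(2 * n)) (db d : 'cV[R]_(2 * n)) : 'cV[R]_(2 * n) :=
  A *m d + db.

Definition real_superchannel (A O Y : 'M[R]_(2 * n)) (db : 'cV[R]_(2 * n)) : Prop :=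
  forall T N d, real_channel T N d ->
    real_channel (sc_T A O T) (sc_N A Y N) (sc_d A db d).

(* trace norm of a real square matrix: sum of singular values, realised as
   sup { tr(O M) | O orthogonal } (von Neumann's variational formula) *)
Definition trnorm (m : nat) (M : 'M[R]_m) : R :=
  sup (fun r : R => exists O : 'M[R]_m, O *m O^T = 1%:M /\ r = \tr (O *m M)).

Definition l1norm (m : nat) (v : 'cV[R]_m) : R := \sum_i `|v i 0|.

Definition hfun (t : R) : R := if t == 0 then 0 else 1.

Definition Id_GC (T N : 'M[R]_(2 * n)) (d : 'cV[R]_(2 * n)) : R :=
  hfun (trnorm (blk_eo T)) + hfun (trnorm (blk_oe T) * trnorm (blk_ee T))
  + hfun (trnorm (blk_oe N)) + hfun (l1norm (vec_e d)).

End GaussDefs.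

(* Each summand of Id_GC vanishes exactly when one of the four reality
   conditions holds, since the trace norm and the l1 norm are definite; this
   gives GC1, and reduces GC2 to showing that a real superchannel preserves
   each condition.  Feeding the superchannel the real test channels
   (0, 1, d), (1, N, 0) and (u e_b^T, 1, 0), with u supported on even modes
   and b even, forces A^{eo} = 0 and dbar^e = 0, and then either the even
   rows of A vanish, or A and S = Sigma O^T Sigma are both block diagonal for
   the odd/even splitting.  For the orthogonal matrix S, S^{eo} = 0 already
   implies S^{oe} = 0.  In both cases every vanishing block of T is inherited
   by A T S. *)

From HB Require Import structures.
From mathcomp Require Import all_boot all_order all_algebra.
From mathcomp Require Import boolp classical_sets reals.
From mathcomp Require Import complex.
From mathcomp Require Import perm zify ring lra.
Set Implicit Arguments. Unset Strict Implicit. Unset Printing Implicit Defensive.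
Import Order.TTheory GRing.Theory Num.Theory.
Local Open Scope ring_scope.

Section ParityIndices.
Variable n : nat.

Definition ix (p : bool) (k : 'I_n) : 'I_(2 * n) := if p then eix k else oix k.

Lemma odd_ix p k : odd (ix p k) = p.
Proof. by case: p; rewrite /= ?addn1 /= mul2n odd_double. Qed.

Lemma half_ord_lt (c : 'I_(2 * n)) : (c./2 < n)%N.
Proof. by rewrite ltn_half_double -mul2n. Qed.

Definition hix (c : 'I_(2 * n)) : 'I_n := Ordinal (half_ord_lt c).

Lemma hix_ix p k : hix (ix p k) = k.
Proof. by apply/val_inj; case: p => /=; lia. Qed.

Lemma ixK (c : 'I_(2 * n)) : ix (odd c) (hix c) = c.
Proof. by apply/val_inj; have := odd_double_half c; case: (odd c) => /=; lia. Qed.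

Lemma ix_inj p q k l : (ix p k == ix q l) = (p == q) && (k == l).
Proof.
apply/eqP/andP => [E|[/eqP-> /eqP->]] //.
by rewrite -(odd_ix p k) -(odd_ix q l) -{2}(hix_ix p k) -{2}(hix_ix q l) E.
Qed.

Lemma sum_parity (V : nmodType) (F : 'I_(2 * n) -> V) :
  \sum_c F c = \sum_k \sum_(p : bool) F (ix p k).
Proof.
rewrite (reindex (fun kp : 'I_n * bool => ix kp.2 kp.1)); last first.
  apply: onW_bij; exists (fun c => (hix c, odd c)) => [[k p]|c] /=.
    by rewrite odd_ix hix_ix.
  exact: ixK.
by rewrite pair_big.
Qed.

End ParityIndices.

Section ParityBlocks.
Variables (R : pzRingType) (m : nat).
Implicit Types (M A B S T : 'M[R]_m) (v : 'cV[R]_m).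

(* Parities are those of 0-based indices, so [odd c] marks the paper's even
   indices: [null_block true false M] is M^{eo} = 0. *)
Definition null_block (p q : bool) M := forall c d : 'I_m, odd c = p -> odd d = q -> M c d = 0.
Definition null_part (p : bool) v := forall c : 'I_m, odd c = p -> v c 0 = 0.
Definition parity_diag M := forall c d : 'I_m, odd c != odd d -> M c d = 0.

Lemma parity_diagP M : parity_diag M <-> null_block false true M /\ null_block true false M.
Proof.
split=> [dM | [M01 M10] c d].
  by split=> c d Ec Ed; apply: dM; rewrite Ec Ed.
by case Ec: (odd c); case Ed: (odd d) => // _; [exact: M10 | exact: M01].
Qed.

Lemma null_block_mul_parity_diag A T S p q :
  parity_diag A -> parity_diag S -> null_block p q T -> null_block p q (A *m T *m S).
Proof.
move=> dA dS T0 x y px qy; rewrite mxE big1 // => d _.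
have [qd | nqd] := eqVneq (odd d) q; last by rewrite dS ?mulr0 // qy.
rewrite mxE big1 ?mul0r // => c _.
have [pc | npc] := eqVneq (odd c) p; first by rewrite T0 ?mulr0.
by rewrite dA ?mul0r // px eq_sym.
Qed.

Lemma null_rows_mul A B p :
  (forall q, null_block p q A) -> forall q, null_block p q (A *m B).
Proof.
by move=> A0 q x y px _; rewrite mxE big1 // => c _; rewrite (A0 (odd c)) ?mul0r.
Qed.

Lemma null_block0 p q : null_block p q 0.
Proof. by move=> c d _ _; rewrite mxE. Qed.

Lemma null_block1 p q : p != q -> null_block p q 1%:M.
Proof.
move=> pq c d pc qd; rewrite mxE; case: eqP => // cd.
by move: pq; rewrite -pc -qd cd eqxx.
Qed.

Lemma null_partD p v w : null_part p v -> null_part p w -> null_part p (v + w).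
Proof. by move=> v0 w0 c pc; rewrite mxE v0 ?w0 ?addr0. Qed.

Lemma null_partB p v w : null_part p v -> null_part p w -> null_part p (v - w).
Proof. by move=> v0 w0 c pc; rewrite !mxE v0 ?w0 ?subr0. Qed.

Lemma null_part_delta p (e : 'I_m) : odd e = ~~ p -> null_part p (delta_mx e 0).
Proof.
move=> ep c pc; rewrite mxE; have [ce | //] := eqVneq c e.
by move: ep; rewrite -ce pc; case: p pc.
Qed.

Lemma mul_col_rowE (a : 'cV[R]_m) (s : 'rV[R]_m) x y : (a *m s) x y = a x 0 * s 0 y.
Proof. by rewrite mxE big_ord1. Qed.

End ParityBlocks.

Lemma null_block_outer (R : idomainType) m (a : 'cV[R]_m) (s : 'rV[R]_m) p q (y : 'I_m) :
  null_block p q (a *m s) -> odd y = q -> s 0 y != 0 -> null_part p a.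
Proof.
move=> as0 qy sy c pc; apply/eqP; move: (as0 c y pc qy).
by rewrite mul_col_rowE => /eqP; rewrite mulf_eq0 (negbTE sy) orbF.
Qed.

Lemma matrix_of_fun_eq0 (R : nmodType) m1 m2 (F : 'I_m1 -> 'I_m2 -> R) :
  \matrix_(k, l) F k l = 0 <-> forall k l, F k l = 0.
Proof.
split=> [/matrixP F0 k l | F0]; last by apply/matrixP => k l; rewrite !mxE F0.
by have := F0 k l; rewrite !mxE.
Qed.

Section ParityBlocks2n.
Variables (R : realType) (n : nat).
Implicit Types (M : 'M[R]_(2 * n)) (v : 'cV[R]_(2 * n)).

Lemma null_blockP p q M : null_block p q M <-> forall k l, M (ix p k) (ix q l) = 0.
Proof.
split=> [M0 k l | M0 c d Ec Ed]; first by rewrite M0 ?odd_ix.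
by rewrite -(ixK c) -(ixK d) Ec Ed M0.
Qed.

Lemma null_partP p v : null_part p v <-> forall k, v (ix p k) 0 = 0.
Proof.
split=> [v0 k | v0 c Ec]; first by rewrite v0 ?odd_ix.
by rewrite -(ixK c) Ec v0.
Qed.

Lemma blk_eo_eq0 M : blk_eo M = 0 <-> null_block true false M.
Proof. by rewrite null_blockP; apply: matrix_of_fun_eq0. Qed.

Lemma blk_oe_eq0 M : blk_oe M = 0 <-> null_block false true M.
Proof. by rewrite null_blockP; apply: matrix_of_fun_eq0. Qed.

Lemma blk_ee_eq0 M : blk_ee M = 0 <-> null_block true true M.
Proof. by rewrite null_blockP; apply: matrix_of_fun_eq0. Qed.

Lemma vec_e_eq0 v : vec_e v = 0 <-> null_part true v.
Proof.
rewrite null_partP; split=> [/matrixP v0 k | v0].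
  by have := v0 k 0; rewrite !mxE.
by apply/matrixP => k i; rewrite !mxE v0.
Qed.

End ParityBlocks2n.

Section Orthogonal.
Variables (R : realDomainType) (m : nat).
Implicit Types (S : 'M[R]_m).

Lemma orthogonal_row_sqr S x : S *m S^T = 1%:M -> \sum_y S x y ^+ 2 = 1.
Proof.
move/(congr1 (fun M : 'M[R]_m => M x x)); rewrite !mxE eqxx mulr1n => <-.
by apply: eq_bigr => y _; rewrite mxE expr2.
Qed.

Lemma orthogonal_entry_le1 S x y : S *m S^T = 1%:M -> `|S x y| <= 1.
Proof.
move=> /(orthogonal_row_sqr x) row1.
have : S x y ^+ 2 <= 1.
  by rewrite -row1 (bigD1 y) //= lerDl sumr_ge0 // => z _; rewrite sqr_ge0.
by rewrite -real_normK ?num_real // expr_le1.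
Qed.

Lemma orthogonal_row_neq0 S x : S *m S^T = 1%:M -> exists y, S x y != 0.
Proof.
move=> /(orthogonal_row_sqr x) row1; apply/existsP; apply: contraT.
rewrite negb_exists => /forallP S0; move: row1; rewrite big1 => [/eqP|y _].
  by rewrite eq_sym oner_eq0.
by move/negPn: (S0 y) => /eqP ->; rewrite expr0n.
Qed.

(* The rows indexed by P carry the same squared mass as the columns indexed
   by P; when the columns P vanish outside the rows P, nothing is left for the
   entries in rows P and columns outside P. *)
Lemma orthogonal_block_triangular S (P : pred 'I_m) :
  S *m S^T = 1%:M -> S^T *m S = 1%:M ->
  (forall x y, ~~ P x -> P y -> S x y = 0) -> forall x y, P x -> ~~ P y -> S x y = 0.
Proof.
move=> SSt StS S0.
pose a := \sum_(x | P x) \sum_(y | P y) S x y ^+ 2.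
pose b := \sum_(x | P x) \sum_(y | ~~ P y) S x y ^+ 2.
have rows : a + b = \sum_(x | P x) 1.
  rewrite -big_split /=; apply: eq_bigr => x _.
  by rewrite -(orthogonal_row_sqr x SSt) [RHS](bigID P).
have cols : a = \sum_(x | P x) 1.
  rewrite /a exchange_big /=; apply: eq_bigr => y Py.
  have := orthogonal_row_sqr y (S := S^T); rewrite trmxK => /(_ StS) <-.
  rewrite [RHS](bigID P) /= [X in _ = _ + X]big1 ?addr0 => [|x nPx].
    by apply: eq_bigr => x _; rewrite mxE.
  by rewrite mxE S0 // expr0n.
have b0 : b = 0 by apply: (addrI a); rewrite addr0 rows cols.
move=> x y Px nPy.
have row0 := psumr_eq0P (fun x _ => sumr_ge0 _ (fun z _ => sqr_ge0 (S x z))) b0 Px.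
apply/eqP; rewrite -sqrf_eq0; apply/eqP.
exact: (psumr_eq0P (fun z _ => sqr_ge0 (S x z)) row0).
Qed.

Lemma orthogonal_null_block S :
  S *m S^T = 1%:M -> null_block true false S -> null_block false true S.
Proof.
move=> SSt S10 x y ex oy.
apply: (orthogonal_block_triangular (P := fun c => ~~ odd c) SSt (mulmx1C SSt)).
- by move=> x' y'; rewrite negbK => ox' ey'; apply: S10 => //; apply: negbTE.
- by rewrite ex.
- by rewrite oy.
Qed.

End Orthogonal.

Lemma addr_closed_cover2 (V : zmodType) (X P Q : V -> Prop) :
  (forall x y, X x -> X y -> X (x + y)) ->
  (forall x y, P x -> P y -> P (x - y)) -> (forall x y, Q x -> Q y -> Q (x - y)) ->
  (forall x, X x -> P x \/ Q x) -> (forall x, X x -> P x) \/ (forall x, X x -> Q x).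
Proof.
move=> XD PB QB cover.
case: (pselect (forall x, X x -> P x)) => [|/existsNP[x /not_implyP[Xx nPx]]]; first by left.
right=> y Xy; have Qx : Q x by case: (cover x Xx).
case: (cover _ (XD _ _ Xx Xy)) => [Pxy | Qxy]; last by rewrite -(addKr x y) addrC; apply: QB.
case: (cover y Xy) => // Py.
by case: nPx; rewrite -(addrK y x); apply: PB.
Qed.

Section TraceNorm.
Variables (R : realType) (m : nat).
Implicit Types (M O : 'M[R]_m).

Lemma trnorm_ub M O : O *m O^T = 1%:M -> \tr (O *m M) <= trnorm M.
Proof.
move=> HO; apply: (ub_le_sup _ (ex_intro _ O (conj HO erefl))).
exists (\sum_a \sum_b `|M b a|) => _ [Q [HQ ->]].
rewrite /mxtrace; apply: ler_sum => a _; rewrite mxE; apply: ler_sum => b _.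
by rewrite (le_trans (ler_norm _)) // normrM ler_piMl // orthogonal_entry_le1.
Qed.

Lemma trnorm0 : trnorm (0 : 'M[R]_m) = 0.
Proof.
rewrite /trnorm (_ : (fun r : R => _) = [set 0%R]%classic) ?sup1 //.
apply/funext => r; apply/propext; split=> [[O [_ ->]] | ->].
  by rewrite mulmx0 mxtrace0.
by exists 1%:M; rewrite trmx1 mulmx1 mulmx0 mxtrace0.
Qed.

(* For the transposition (i j) with suitable signs as O, tr (O M) is a sum of
   absolute values containing |M i j|. *)
Lemma trnorm_eq0 M : trnorm M = 0 <-> M = 0.
Proof.
split=> [M0 | ->]; last exact: trnorm0.
apply/matrixP => i j; rewrite mxE; apply/eqP; apply: contraT => Mij.
pose s a : R := if M (tperm i j a) a < 0 then -1 else 1.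
have s2 a : s a * s a = 1 by rewrite /s; case: ifP; rewrite ?mulrNN mulr1.
have sM a : s a * M (tperm i j a) a = `|M (tperm i j a) a|.
  rewrite /s; case: ltrP => [/ltr0_norm-> | /ger0_norm->]; by rewrite ?mulN1r ?mul1r.
pose O : 'M[R]_m := \matrix_(a, b) (if tperm i j a == b then s a else 0).
have OE (B : 'M[R]_m) a c : (O *m B) a c = s a * B (tperm i j a) c.
  rewrite mxE (bigD1 (tperm i j a)) //= big1 => [|b /negbTE nb].
    by rewrite mxE eqxx addr0.
  by rewrite mxE eq_sym nb mul0r.
have HO : O *m O^T = 1%:M.
  apply/matrixP => a b; rewrite OE !mxE (inj_eq perm_inj) [b == a]eq_sym.
  by case: eqP => [->|]; rewrite ?s2 ?mulr0.
have := trnorm_ub M HO; rewrite M0 /mxtrace (bigD1 j) //= OE sM tpermR.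
under eq_bigr do rewrite OE sM.
have : 0 <= \sum_(a | a != j) `|M (tperm i j a) a| by apply: sumr_ge0.
have : 0 < `|M i j| by rewrite normr_gt0.
lra.
Qed.

End TraceNorm.

Section StepFunction.
Variable R : realType.
Implicit Types x y : R.

Lemma hfun_ge0 x : 0 <= hfun x.
Proof. by rewrite /hfun; case: ifP. Qed.

Lemma hfun_eq0 x : hfun x = 0 <-> x = 0.
Proof.
rewrite /hfun; case: eqP => [-> // | nx]; split=> [/eqP | /nx //].
by rewrite oner_eq0.
Qed.

Lemma hfun_le x y : (y = 0 -> x = 0) -> hfun x <= hfun y.
Proof.
move=> yx; rewrite /hfun; have [/yx->|_] := eqVneq y 0; first by rewrite eqxx.
by case: ifP.
Qed.

End StepFunction.

Section PositiveSemidefinite.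
Variable R : realType.
Local Notation C := R[i].

Lemma rpsd1 m : rpsd (1%:M : 'M[R]_m).
Proof.
move=> v; rewrite mulmx1 mxE; apply: sumr_ge0 => b _.
by rewrite mxE -expr2 sqr_ge0.
Qed.

Lemma conj_i : ('i%C : C)^* = - 'i%C.
Proof. by apply/eqP; rewrite eq_complex /= oppr0 !eqxx. Qed.

Lemma conj_real (x : R) : ((x%:C)%C : C)^* = (x%:C)%C.
Proof. exact: conjc_real. Qed.

Lemma cpsdE m (M : 'M[C]_m) :
  cpsd M <-> forall v : 'cV_m, 0 <= \sum_b \sum_a (v a 0)^* * M a b * v b 0.
Proof.
suff formE (v : 'cV_m) : ((map_mx (fun z => z^*) v)^T *m M *m v) 0 0
             = \sum_b \sum_a (v a 0)^* * M a b * v b 0.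
  by split=> M0 v; have := M0 v; rewrite formE.
rewrite mxE; apply: eq_bigr => b _; rewrite mxE mulr_suml.
by apply: eq_bigr => a _; rewrite !mxE.
Qed.

(* Evaluating at v and at its conjugate gives conjugate imaginary parts,
   which cancel in the sum. *)
Lemma cpsd_real_part m (N D W : 'M[R]_m) :
  cpsd (cplx N + 'i%C *: cplx D - 'i%C *: cplx W) -> cpsd (cplx N).
Proof.
set K := (X in cpsd X -> _); move/cpsdE => K0; apply/cpsdE => v.
pose w := map_mx (fun z : C => z^*) v.
have sum_conj : \sum_b \sum_a (v a 0)^* * K a b * v b 0
    + (\sum_b \sum_a (w a 0)^* * K a b * w b 0)^*
    = 2%:R * \sum_b \sum_a (v a 0)^* * cplx N a b * v b 0.
  rewrite !rmorph_sum mulr_sumr -big_split; apply: eq_bigr => b _ /=.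
  rewrite !rmorph_sum mulr_sumr -big_split; apply: eq_bigr => a _ /=.
  rewrite !mxE !rmorphM !rmorphD rmorphN !rmorphM !conjCK /= conj_i !conj_real conjCK.
  ring.
have w0 : 0 <= (\sum_b \sum_a (w a 0)^* * K a b * w b 0)^* by rewrite conjC_ge0.
have := addr_ge0 (K0 v) w0.
by rewrite sum_conj pmulr_rge0 // ltr0n.
Qed.

End PositiveSemidefinite.

Section SymplecticForm.
Variables (R : realType) (n : nat).
Local Notation Delta := (Delta R n).
Local Notation C := R[i].

Lemma cplxE m (M : 'M[R]_m) a b : cplx M a b = ((M a b)%:C)%C.
Proof. by rewrite mxE. Qed.

Lemma Delta_ix p q k l : Delta (ix p k) (ix q l) = (k == l)%:R * (q%:R - p%:R).
Proof.
have half_ix r j : (ix r j)./2 = j :> nat by exact: (congr1 val (hix_ix r j)).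
rewrite mxE !odd_ix !half_ix -[(k : nat) == l]/(k == l); case: (k == l); last by rewrite mul0r.
by case: p; case: q; rewrite /= ?subrr ?sub0r ?subr0 mul1r.
Qed.

Lemma Delta_diag c : Delta c c = 0.
Proof. by rewrite mxE eqxx; case: (odd c). Qed.

(* v^* (1 + i Delta) v = sum_k |v_(2k-1) + i v_(2k)|^2 *)
Lemma cpsd_1_Delta : cpsd (cplx 1%:M + 'i%C *: cplx Delta).
Proof.
set K := cplx _ + _.
have Kix p q k l : K (ix p k) (ix q l)
    = (k == l)%:R * ((p == q)%:R + 'i%C * ((q%:R - p%:R : R)%:C)%C).
  rewrite mxE [X in _ + X]mxE !cplxE Delta_ix mxE ix_inj.
  case: (k == l); rewrite ?andbF ?andbT /=; first by rewrite !mul1r; case: (p == q).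
  by rewrite !mul0r -[0%:C%C]/(0 : C) mulr0 addr0.
apply/cpsdE => v; rewrite sum_parity; apply: sumr_ge0 => l _.
have diag q : \sum_a (v a 0)^* * K a (ix q l) * v (ix q l) 0
    = \sum_(p : bool) (v (ix p l) 0)^* * K (ix p l) (ix q l) * v (ix q l) 0.
  rewrite sum_parity (bigD1 l) //= [X in _ + X]big1 ?addr0 // => k /negbTE kl.
  by apply: big1 => p _; rewrite Kix kl mul0r mulr0 mul0r.
rewrite (eq_bigr _ (fun q _ => diag q)) !big_bool !Kix eqxx /=.
set x := v (oix l) 0; set y := v (eix l) 0.
rewrite !rmorphB !rmorph0 !rmorph1.
rewrite [X in 0 <= X](_ : _ = (x + 'i%C * y) * (x + 'i%C * y)^*) ?mul_conjC_ge0 //.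
by rewrite rmorphD rmorphM /= conj_i; ring: (sqr_i R).
Qed.

Lemma Sigma_orthogonal : Sigma R n *m (Sigma R n)^T = 1%:M.
Proof.
apply/matrixP => a b; rewrite !mxE (bigD1 a) //= big1 => [|c /negbTE ca].
  rewrite !mxE eqxx addr0 eq_sym; case: eqP => [->|_]; last by rewrite mulr0.
  by case: odd; rewrite ?mulrNN mulr1.
by rewrite !mxE eq_sym ca mul0r.
Qed.

Lemma rank1_isotropic (u : 'cV[R]_(2 * n)) b :
  (u *m delta_mx 0 b) *m Delta *m (u *m delta_mx 0 b)^T = 0.
Proof.
rewrite trmx_mul trmx_delta !mulmxA -!(mulmxA u) -rowE -colE.
rewrite (_ : col b (row b Delta) = 0) ?mul0mx ?mulmx0 //.
by apply/matrixP => i j; rewrite mxE [in LHS]mxE Delta_diag mxE.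
Qed.

Lemma gauss_isotropic (T : 'M[R]_(2 * n)) d :
  T *m Delta *m T^T = 0 -> gauss_channel T 1%:M d.
Proof.
move=> T0; split; first exact: trmx1.
split; first exact: rpsd1.
rewrite T0 (_ : cplx 0 = 0); last by apply/matrixP => i j; rewrite !mxE.
by rewrite scaler0 subr0; apply: cpsd_1_Delta.
Qed.

End SymplecticForm.

Lemma l1norm_eq0 (R : realType) m (v : 'cV[R]_m) : l1norm v = 0 <-> v = 0.
Proof.
split=> [v0 | ->]; last by rewrite /l1norm big1 // => i _; rewrite mxE normr0.
apply/matrixP => i j; rewrite ord1 mxE; apply/eqP; rewrite -normr_eq0; apply/eqP.
exact: (psumr_eq0P (fun k _ => normr_ge0 (v k 0)) v0).
Qed.

Section ImaginarityMeasure.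
Variables (R : realType) (n : nat).
Implicit Types (T N : 'M[R]_(2 * n)) (d : 'cV[R]_(2 * n)).

Lemma real_condsE T N d : real_conds T N d <->
  [/\ null_part true d, null_block false true N, null_block true false T
    & null_block false true T \/ null_block true true T].
Proof.
split=> [[d0 [N0 [] T0]] | [/null_partP d0 /null_blockP N0 /null_blockP T10 T0]].
- split; [exact/null_partP | exact/null_blockP | |].
    by apply/null_blockP => k l; case: (T0 k l).
  by right; apply/null_blockP => k l; case: (T0 k l).
- split; [exact/null_partP | exact/null_blockP | |].
    by apply/null_blockP => k l; case: (T0 k l).
  by left; apply/null_blockP => k l; case: (T0 k l).
- do 2!split=> //.
  by case: T0 => /null_blockP T0; [right | left] => k l; rewrite T0 T10.
Qed.

Lemma trnorm_eo_eq0 T : trnorm (blk_eo T) = 0 <-> null_block true false T.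
Proof. by rewrite trnorm_eq0 blk_eo_eq0. Qed.

Lemma trnorm_oe_eq0 T : trnorm (blk_oe T) = 0 <-> null_block false true T.
Proof. by rewrite trnorm_eq0 blk_oe_eq0. Qed.

Lemma trnorm_oe_ee_eq0 T : trnorm (blk_oe T) * trnorm (blk_ee T) = 0 <->
  null_block false true T \/ null_block true true T.
Proof.
rewrite -trnorm_oe_eq0 -blk_ee_eq0 -trnorm_eq0.
by split=> [/eqP | [] ->]; rewrite ?mul0r ?mulr0 // mulf_eq0 => /orP[] /eqP; tauto.
Qed.

Lemma l1norm_vec_e_eq0 d : l1norm (vec_e d) = 0 <-> null_part true d.
Proof. by rewrite l1norm_eq0 vec_e_eq0. Qed.

Lemma Id_GC_ge0 T N d : 0 <= Id_GC T N d.
Proof. by rewrite !addr_ge0 ?hfun_ge0. Qed.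

Lemma Id_GC_eq0 T N d : Id_GC T N d = 0 <-> real_conds T N d.
Proof.
rewrite real_condsE /Id_GC; split=> [/eqP | [d0 N0 T10 T0]].
  rewrite !paddr_eq0 ?addr_ge0 ?hfun_ge0 // => /andP[/andP[/andP[]]].
  move=> /eqP/hfun_eq0/trnorm_eo_eq0 T10 /eqP/hfun_eq0/trnorm_oe_ee_eq0 T0.
  by move=> /eqP/hfun_eq0/trnorm_oe_eq0 N0 /eqP/hfun_eq0/l1norm_vec_e_eq0 d0.
have h0 (x : R) : x = 0 -> hfun x = 0 by move/hfun_eq0.
rewrite !h0 ?addr0 //; [exact/l1norm_vec_e_eq0 | exact/trnorm_oe_eq0 |
  exact/trnorm_oe_ee_eq0 | exact/trnorm_eo_eq0].
Qed.

Lemma Id_GC_le T N d T' N' d' :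
  (null_block true false T -> null_block true false T') ->
  (null_block false true T \/ null_block true true T ->
   null_block false true T' \/ null_block true true T') ->
  (null_block false true N -> null_block false true N') ->
  (null_part true d -> null_part true d') ->
  Id_GC T' N' d' <= Id_GC T N d.
Proof.
move=> T10 T0 N0 d0; rewrite /Id_GC !lerD ?hfun_le //.
- by move=> /trnorm_eo_eq0/T10/trnorm_eo_eq0.
- by move=> /trnorm_oe_ee_eq0/T0/trnorm_oe_ee_eq0.
- by move=> /trnorm_oe_eq0/N0/trnorm_oe_eq0.
- by move=> /l1norm_vec_e_eq0/d0/l1norm_vec_e_eq0.
Qed.

End ImaginarityMeasure.

Section RealSuperchannel.
Variables (R : realType) (n : nat) (A O Y : 'M[R]_(2 * n)) (db : 'cV[R]_(2 * n)).
Hypotheses (O_orth : O *m O^T = 1%:M) (real_Phi : real_superchannel A O Y db).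
Local Notation Sigma := (Sigma R n).
Local Notation S := (Sigma *m O^T *m Sigma).

Lemma sc_TE T : sc_T A O T = A *m T *m S.
Proof. by rewrite /sc_T !mulmxA. Qed.

Lemma S_orthogonal : S *m S^T = 1%:M.
Proof.
rewrite !trmx_mul trmxK -!mulmxA (mulmxA Sigma Sigma^T) Sigma_orthogonal mul1mx.
by rewrite (mulmxA O^T) (mulmx1C O_orth) mul1mx Sigma_orthogonal.
Qed.

Lemma real_sc_test T d : T *m Delta R n *m T^T = 0 -> real_conds T 1%:M d ->
  real_conds (A *m T *m S) (sc_N A Y 1%:M) (sc_d A db d).
Proof.
move=> T0 Treal; rewrite -sc_TE.
by case: (real_Phi (conj (gauss_isotropic d T0) Treal)).
Qed.

Lemma real_sc_d d : null_part true d -> null_part true (sc_d A db d).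
Proof.
move=> d0; have T0 : 0 *m Delta R n *m 0^T = 0 :> 'M[R]_(2 * n) by rewrite !mul0mx.
have real0 : real_conds 0 1%:M d.
  apply/real_condsE; split=> //; first exact: null_block1.
    exact: null_block0.
  by left; exact: null_block0.
by case/real_condsE: (real_sc_test T0 real0).
Qed.

Lemma real_sc_A_eo : null_block true false A.
Proof.
have db0 : null_part true db.
  have null0 : null_part true (0 : 'cV[R]_(2 * n)) by move=> c _; rewrite mxE.
  by have := real_sc_d null0; rewrite /sc_d mulmx0 add0r.
move=> c e oc ee; have := real_sc_d (null_part_delta R (p := true) ee) oc.
by rewrite /sc_d mxE -colE mxE db0 // addr0.
Qed.

Lemma real_sc_N T N d : gauss_channel T N d ->
  null_block false true N -> null_block false true (sc_N A Y N).
Proof.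
move=> [N_sym [N_psd N_cpsd]] N0.
have gauss1 : gauss_channel 1%:M N 0.
  split; first exact: N_sym.
  split; first exact: N_psd.
  rewrite mul1mx trmx1 mulmx1 addrK.
  exact: cpsd_real_part N_cpsd.
have real1 : real_conds 1%:M N 0.
  apply/real_condsE; split; [by move=> c _; rewrite mxE | exact: N0 | exact: null_block1 |].
  by left; exact: null_block1.
by have [_ /real_condsE[]] := real_Phi (conj gauss1 real1).
Qed.

Lemma real_sc_rank1 u (b : 'I_(2 * n)) : null_part false u -> odd b ->
  let M := A *m u *m row b S in
  null_block true false M /\ (null_block false true M \/ null_block true true M).
Proof.
move=> u0 ob; set T := u *m delta_mx 0 b.
have realT : real_conds T 1%:M 0.
  apply/real_condsE; split; [by move=> c _; rewrite mxE | exact: null_block1 | |].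
    move=> c e _ ee; rewrite mul_col_rowE mxE eqxx /=.
    by have [eb | _] := eqVneq e b; [move: ee; rewrite eb ob | rewrite mulr0].
  by left=> c e ec _; rewrite mul_col_rowE u0 ?mul0r.
have := real_sc_test (rank1_isotropic u b) realT.
by rewrite rowE !mulmxA => /real_condsE[].
Qed.

Lemma real_sc_cover u (b : 'I_(2 * n)) : null_part false u -> odd b ->
  null_part false (A *m u) \/ null_part true (A *m u).
Proof.
move=> u0 ob; have [y Sby] := orthogonal_row_neq0 b S_orthogonal.
have Sby' : row b S 0 y != 0 by rewrite mxE.
have [M10 M0] := real_sc_rank1 u0 ob.
case Ey: (odd y); last by right; exact: null_block_outer M10 Ey Sby'.
by case: M0 => M0; [left | right]; exact: null_block_outer M0 Ey Sby'.
Qed.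

Lemma real_sc_S_eo u (c : 'I_(2 * n)) : null_part false u -> odd c -> (A *m u) c 0 != 0 ->
  null_block true false S.
Proof.
move=> u0 oc Au0 b y ob ey; have [M10 _] := real_sc_rank1 u0 ob.
have := M10 c y oc ey; rewrite mul_col_rowE [X in _ * X]mxE => /eqP.
by rewrite mulf_eq0 (negbTE Au0) => /eqP.
Qed.

Lemma real_sc_A_oe (c e : 'I_(2 * n)) : odd c -> odd e -> A c e != 0 ->
  null_block false true A.
Proof.
move=> oc oe Ace.
pose X w := exists2 u, null_part false u & w = A *m u.
have XD w1 w2 : X w1 -> X w2 -> X (w1 + w2).
  move=> [u1 u10 ->] [u2 u20 ->]; exists (u1 + u2); first exact: null_partD.
  by rewrite mulmxDr.
have cover w : X w -> null_part false w \/ null_part true w.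
  by move=> [u u0 ->]; apply: real_sc_cover u0 oe.
have X_col (e' : 'I_(2 * n)) : odd e' -> X (col e' A).
  by move=> oe'; exists (delta_mx e' 0); [exact: null_part_delta | rewrite colE].
case: (addr_closed_cover2 XD (@null_partB _ _ false) (@null_partB _ _ true) cover) => Xw.
  by move=> c' e' ec' oe'; have := Xw _ (X_col e' oe') c' ec'; rewrite mxE.
by have := Xw _ (X_col e oe) c oc; rewrite mxE => /eqP; rewrite (negbTE Ace).
Qed.

Lemma real_sc_cases :
  (forall q, null_block true q A) \/ (parity_diag A /\ parity_diag S).
Proof.
have A10 := real_sc_A_eo.
case: (pselect (null_block true true A)) => [A11 | /existsNP[c /existsNP[e]]].
  by left=> -[]; [exact: A11 | exact: A10].
move=> /not_implyP[oc /not_implyP[oe /eqP Ace]].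
have S10 : null_block true false S.
  by apply: (real_sc_S_eo (null_part_delta R (p := false) oe) oc); rewrite -colE mxE.
right; split; apply/parity_diagP; split=> //; first exact: real_sc_A_oe oc oe Ace.
exact: orthogonal_null_block S_orthogonal S10.
Qed.

Lemma real_sc_T_eo T : null_block true false T -> null_block true false (sc_T A O T).
Proof.
rewrite sc_TE => T10; case: real_sc_cases => [A1 | [dA dS]].
  by rewrite -mulmxA; exact: null_rows_mul.
exact: null_block_mul_parity_diag.
Qed.

Lemma real_sc_T_oe_ee T :
  null_block false true T \/ null_block true true T ->
  null_block false true (sc_T A O T) \/ null_block true true (sc_T A O T).
Proof.
rewrite sc_TE => T0; case: real_sc_cases => [A1 | [dA dS]].
  by right; rewrite -mulmxA; exact: null_rows_mul.
by case: T0 => T0; [left | right]; exact: null_block_mul_parity_diag.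
Qed.

End RealSuperchannel.

Theorem theorem4 (R : realType) (n : nat) (hn : (1 <= n)%N) :
  (forall (T N : 'M[R]_(2 * n)) (d : 'cV[R]_(2 * n)),
      gauss_channel T N d ->
      0 <= Id_GC T N d /\ (Id_GC T N d = 0 <-> real_channel T N d)) /\
  (forall (A O Y : 'M[R]_(2 * n)) (db : 'cV[R]_(2 * n))
          (T N : 'M[R]_(2 * n)) (d : 'cV[R]_(2 * n)),
      gauss_superchannel A O Y db -> real_superchannel A O Y db ->
      gauss_channel T N d ->
      Id_GC (sc_T A O T) (sc_N A Y N) (sc_d A db d) <= Id_GC T N d).
Proof.
(* The argument works for n = 0 as well. *)
split=> [T N d gT | A O Y db T N d [_ [O_orth _]] real_Phi gT].
  by split; [exact: Id_GC_ge0 | rewrite Id_GC_eq0 /real_channel; tauto].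
apply: Id_GC_le.
- exact: (real_sc_T_eo O_orth real_Phi).
- exact: (real_sc_T_oe_ee O_orth real_Phi).
- exact: (real_sc_N real_Phi gT).
- exact: (real_sc_d real_Phi).
Qed.
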